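(* Let $k\ge1$ and let $a\ge b\ge0$ be integers with $a+b\le k$. Then $\mathcal{R}^k_{(a,b),(b,a)}=T_1\cup T_2\cup T_3\cup T_4\cup T_5$, and the sets $T_1,\dots,T_5$ are pairwise disjoint. Moreover: - for every weight of the form $(p-2l,p+l)$ or $(p+l,p-2l)$ in $T_1\cup T_2\cup T_3$ (with $p,l$ as in the defining parametrization), $$N^{(k)(p-2l,p+l)}_{(a,b),(b,a)}=N^{(k)(p+l,p-2l)}_{(a,b),(b,a)}=M(p,l);$$ - for every $(p,p)\in T_4\cup T_5$, $N^{(k)(p,p)}_{(a,b),(b,a)}=M(p,0)$, where $$M(p,l)=\min(k,a+b+p-l)-a-b+l-\max(p-b,l)-\max(p-a,l)+1 .$$
   Context: $\widehat{\mathfrak{su}}(3)_k$ fusion. Fix an integer $k\ge1$ and let $P_+^k=\{(\lambda_1,\lambda_2)\in\mathbb{Z}_{\ge0}^2:\lambda_1+\lambda_2\le k\}$. For $\lambda,\mu,\nu\in P_+^k$ set - $\mathcal{A}=\tfrac13[2(\lambda_1+\mu_1+\nu_2)+\lambda_2+\mu_2+\nu_1]$, - $\mathcal{B}=\tfrac13[\lambda_1+\mu_1+\nu_2+2(\lambda_2+\mu_2+\nu_1)]$, - $k_0^{\max}=\min(\mathcal{A},\mathcal{B})$, - $k_0^{\min}=\max(\lambda_1+\lambda_2,\mu_1+\mu_2,\nu_1+\nu_2,\mathcal{A}-\lambda_1,\mathcal{A}-\mu_1,\mathcal{A}-\nu_2,\mathcal{B}-\lambda_2,\mathcal{B}-\mu_2,\mathcal{B}-\nu_1)$.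 The fusion multiplicity is $N^{(k)\nu}_{\lambda,\mu}=\min(k_0^{\max},k)-k_0^{\min}+1$ if $\mathcal{A},\mathcal{B}$ are nonnegative integers, $k_0^{\max}\ge k_0^{\min}$ and $k\ge k_0^{\min}$; otherwise it is $0$. The set $\mathcal{R}^k_{\lambda,\mu}$ is $\{\nu\in P_+^k:N^{(k)\nu}_{\lambda,\mu}\ne0\}$. In the definitions below, $p,l$ range over integers, and each set is empty unless its stated condition holds. - If $b\ge2$ and $k\ge2a+3$: $T_1=\{(p-2l,p+l),(p+l,p-2l):a+2\le p\le\min(a+b,k-a-1,\lfloor2k/3\rfloor,\lfloor(b+k)/2\rfloor),\ \max(1,2p-k)\le l\le\min(p-a-1,\lfloor p/2\rfloor,b)\}$. - If $b\ge1$ and $k\ge a+b+1$: $T_2=\{(p-2l,p+l),(p+l,p-2l):b+1\le p\le\min(a+b,k-a),\ \max(1,p-a)\le l\le\min(p-b,\lfloor p/2\rfloor,b)\}$. - If $b\ge2$ and $k\ge a+b+1$: $T_3=\{(p-2l,p+l),(p+l,p-2l):2\le p\le\min(k-a-1,2b-2),\ \max(1,p-b+1)\le l\le\min(k-a-b,\lfloor p/2\rfloor,b)\}$. - $T_4=\{(p,p):0\le p\le\min(a,k-a)\}$. - If $k\ge2a+2$: $T_5=\{(p,p):a+1\le p\le\min(a+b,\lfloor k/2\rfloor)\}$. *)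

From Stdlib Require Import ZArith Lia Bool.
Open Scope Z_scope.

Definition weight := (Z * Z)%type.

Definition inP (k : Z) (w : weight) : Prop :=
  0 <= fst w /\ 0 <= snd w /\ fst w + snd w <= k.

(* 3*A and 3*B (so that integrality of A, B is a divisibility test) *)
Definition A3 (l m n : weight) : Z :=
  2 * (fst l + fst m + snd n) + snd l + snd m + fst n.
Definition B3 (l m n : weight) : Z :=
  fst l + fst m + snd n + 2 * (snd l + snd m + fst n).

(* When A3, B3 are divisible by 3, these are A and B. *)
Definition Aw (l m n : weight) : Z := A3 l m n / 3.
Definition Bw (l m n : weight) : Z := B3 l m n / 3.

Definition k0max (l m n : weight) : Z := Z.min (Aw l m n) (Bw l m n).

Definition k0min (l m n : weight) : Z :=
  let A := Aw l m n in let B := Bw l m n in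
  Z.max (fst l + snd l) (Z.max (fst m + snd m) (Z.max (fst n + snd n)
  (Z.max (A - fst l) (Z.max (A - fst m) (Z.max (A - snd n)
  (Z.max (B - snd l) (Z.max (B - snd m) (B - fst n)))))))).

Definition fusionN (k : Z) (l m n : weight) : Z :=
  if (A3 l m n mod 3 =? 0) && (B3 l m n mod 3 =? 0)
     && (0 <=? Aw l m n) && (0 <=? Bw l m n)
     && (k0min l m n <=? k0max l m n) && (k0min l m n <=? k)
  then Z.min (k0max l m n) k - k0min l m n + 1
  else 0.

Definition Rset (k : Z) (l m : weight) (n : weight) : Prop :=
  inP k n /\ fusionN k l m n <> 0.

Definition T1par (k a b p l : Z) : Prop :=
  2 <= b /\ 2 * a + 3 <= k /\
  a + 2 <= p /\ p <= a + b /\ p <= k - a - 1 /\ p <= (2 * k) / 3 /\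
  p <= (b + k) / 2 /\
  1 <= l /\ 2 * p - k <= l /\ l <= p - a - 1 /\ l <= p / 2 /\ l <= b.

Definition T2par (k a b p l : Z) : Prop :=
  1 <= b /\ a + b + 1 <= k /\
  b + 1 <= p /\ p <= a + b /\ p <= k - a /\
  1 <= l /\ p - a <= l /\ l <= p - b /\ l <= p / 2 /\ l <= b.

Definition T3par (k a b p l : Z) : Prop :=
  2 <= b /\ a + b + 1 <= k /\
  2 <= p /\ p <= k - a - 1 /\ p <= 2 * b - 2 /\
  1 <= l /\ p - b + 1 <= l /\ l <= k - a - b /\ l <= p / 2 /\ l <= b.

Definition T4par (k a b p : Z) : Prop :=
  0 <= p /\ p <= a /\ p <= k - a.

Definition T5par (k a b p : Z) : Prop :=
  2 * a + 2 <= k /\ a + 1 <= p /\ p <= a + b /\ p <= k / 2.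

Definition pairset (P : Z -> Z -> Prop) (w : weight) : Prop :=
  exists p l, P p l /\ (w = (p - 2 * l, p + l) \/ w = (p + l, p - 2 * l)).

Definition diagset (P : Z -> Prop) (w : weight) : Prop :=
  exists p, P p /\ w = (p, p).

(* T_1, ..., T_5 indexed by i = 1..5 (other indices: empty) *)
Definition Tset (k a b : Z) (i : nat) : weight -> Prop :=
  match i with
  | 1%nat => pairset (T1par k a b)
  | 2%nat => pairset (T2par k a b)
  | 3%nat => pairset (T3par k a b)
  | 4%nat => diagset (T4par k a b)
  | 5%nat => diagset (T5par k a b)
  | _ => fun _ => False
  end.

Definition Mfun (k a b p l : Z) : Z :=
  Z.min k (a + b + p - l) - a - b + l - Z.max (p - b) l - Z.max (p - a) l + 1.

(* The fusion rules are invariant under the duality (x, y) -> (y, x) of weights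
   together with the exchange of the two factors; since (a, b) and (b, a) are dual,
   N^{(x,y)} = N^{(y,x)} here.  Integrality of A forces x = y (mod 3), so every weight
   in the support is (p - 2l, p + l) or its dual with l >= 0.  For such a weight
   A = a + b + p, B = A - l, and the fusion formula collapses to max 0 (M(p, l)).  The
   support is therefore { p - 2l >= 0, M(p, l) >= 1 }, and T_1, ..., T_5 are the pieces
   of this region cut out by comparing l with 0, p - a and p - b. *)
From Stdlib Require Import ZArith Lia.
Open Scope Z_scope.

Definition dualw (w : weight) : weight := (snd w, fst w).

Lemma A3_dual l m n : A3 (dualw l) (dualw m) (dualw n) = B3 l m n.
Proof. unfold A3, B3, dualw; cbn [fst snd]; ring. Qed.

Lemma B3_dual l m n : B3 (dualw l) (dualw m) (dualw n) = A3 l m n.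
Proof. unfold A3, B3, dualw; cbn [fst snd]; ring. Qed.

Lemma k0max_dual l m n : k0max (dualw l) (dualw m) (dualw n) = k0max l m n.
Proof. unfold k0max, Aw, Bw. rewrite A3_dual, B3_dual. apply Z.min_comm. Qed.

Lemma k0min_dual l m n : k0min (dualw l) (dualw m) (dualw n) = k0min l m n.
Proof.
  unfold k0min, Aw, Bw. rewrite A3_dual, B3_dual. unfold dualw; simpl.
  generalize (A3 l m n / 3) (B3 l m n / 3); intros A B.
  apply Z.le_antisymm; rewrite ?Z.max_lub_iff, ?Z.max_le_iff; repeat split; lia.
Qed.

Lemma fusionN_dual k l m n :
  fusionN k (dualw l) (dualw m) (dualw n) = fusionN k l m n.
Proof.
  unfold fusionN, Aw, Bw. rewrite k0max_dual, k0min_dual, A3_dual, B3_dual.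
  destruct (A3 l m n mod 3 =? 0), (B3 l m n mod 3 =? 0),
    (0 <=? A3 l m n / 3), (0 <=? B3 l m n / 3); reflexivity.
Qed.

Lemma A3_comm l m n : A3 m l n = A3 l m n.
Proof. unfold A3; ring. Qed.

Lemma B3_comm l m n : B3 m l n = B3 l m n.
Proof. unfold B3; ring. Qed.

Lemma k0min_comm l m n : k0min m l n = k0min l m n.
Proof.
  unfold k0min, Aw, Bw. rewrite A3_comm, B3_comm.
  generalize (A3 l m n / 3) (B3 l m n / 3); intros A B.
  apply Z.le_antisymm; rewrite ?Z.max_lub_iff, ?Z.max_le_iff; repeat split; lia.
Qed.

Lemma fusionN_comm k l m n : fusionN k m l n = fusionN k l m n.
Proof.
  unfold fusionN, k0max, Aw, Bw. rewrite k0min_comm, A3_comm, B3_comm. reflexivity.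
Qed.

Lemma fusionN_integral k l m n : fusionN k l m n <> 0 -> A3 l m n mod 3 = 0.
Proof.
  unfold fusionN. destruct (A3 l m n mod 3 =? 0) eqn:E.
  - intros _. now apply Z.eqb_eq.
  - simpl. congruence.
Qed.

Lemma fusionN_eq_max0 k l m n :
  A3 l m n mod 3 = 0 -> B3 l m n mod 3 = 0 -> 0 <= k0min l m n ->
  fusionN k l m n = Z.max 0 (Z.min (k0max l m n) k - k0min l m n + 1).
Proof.
  intros HA HB Hmin. unfold fusionN. rewrite HA, HB. unfold k0max in *.
  destruct (0 <=? Aw l m n) eqn:E1, (0 <=? Bw l m n) eqn:E2,
    (k0min l m n <=? Z.min (Aw l m n) (Bw l m n)) eqn:E3, (k0min l m n <=? k) eqn:E4;
    simpl; rewrite ?Z.leb_le, ?Z.leb_gt in *; lia.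
Qed.

Lemma le_div_iff_mul_le x y c : 0 < c -> (x <= y / c <-> c * x <= y).
Proof.
  intros c_pos. split; intros Hle.
  - pose proof (Z.mul_div_le y c c_pos). nia.
  - now apply Z.div_le_lower_bound.
Qed.

Lemma pairset_inter (P Q : Z -> Z -> Prop) nu :
  (forall p l, P p l -> 1 <= l) -> (forall p l, Q p l -> 1 <= l) ->
  pairset P nu -> pairset Q nu -> exists p l, P p l /\ Q p l.
Proof.
  intros P_pos Q_pos (p & l & HP & Hnu) (p' & l' & HQ & Hnu').
  pose proof (P_pos p l HP). pose proof (Q_pos p' l' HQ).
  assert (p' = p /\ l' = l) as [-> ->]
    by (destruct Hnu as [-> | ->], Hnu' as [Heq | Heq]; apply pair_equal_spec in Heq; lia).
  eauto.
Qed.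

Lemma pairset_diagset_disjoint (P : Z -> Z -> Prop) (Q : Z -> Prop) nu :
  (forall p l, P p l -> 1 <= l) -> pairset P nu -> ~ diagset Q nu.
Proof.
  intros P_pos (p & l & HP & Hnu) (q & _ & ->). pose proof (P_pos p l HP).
  destruct Hnu as [Heq | Heq]; apply pair_equal_spec in Heq; lia.
Qed.

Lemma diagset_inter (P Q : Z -> Prop) nu :
  diagset P nu -> diagset Q nu -> exists p, P p /\ Q p.
Proof.
  intros (p & HP & ->) (q & HQ & Heq). apply pair_equal_spec in Heq as [<- _]. eauto.
Qed.

Section FusionOfDualPair.

Variables k a b : Z.
Hypothesis b_ge0 : 0 <= b.
Hypothesis b_le_a : b <= a.

Lemma fusionN_swap x y :
  fusionN k (a, b) (b, a) (x, y) = fusionN k (a, b) (b, a) (y, x).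
Proof.
  rewrite <- (fusionN_dual k (a, b) (b, a) (x, y)). apply fusionN_comm.
Qed.

Section Param.

Variables p l : Z.

Lemma A3_param : A3 (a, b) (b, a) (p - 2 * l, p + l) = (a + b + p) * 3.
Proof. unfold A3; cbn [fst snd]; ring. Qed.

Lemma B3_param : B3 (a, b) (b, a) (p - 2 * l, p + l) = (a + b + p - l) * 3.
Proof. unfold B3; cbn [fst snd]; ring. Qed.

Lemma Aw_param : Aw (a, b) (b, a) (p - 2 * l, p + l) = a + b + p.
Proof. unfold Aw. rewrite A3_param. apply Z_div_mult. lia. Qed.

Lemma Bw_param : Bw (a, b) (b, a) (p - 2 * l, p + l) = a + b + p - l.
Proof. unfold Bw. rewrite B3_param. apply Z_div_mult. lia. Qed.

Hypothesis l_ge0 : 0 <= l.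

Lemma k0min_param :
  k0min (a, b) (b, a) (p - 2 * l, p + l) = Z.max (a + b + l) (Z.max (2 * p - l) (a + p)).
Proof.
  unfold k0min. rewrite Aw_param, Bw_param. cbn [fst snd].
  apply Z.le_antisymm; rewrite ?Z.max_lub_iff, ?Z.max_le_iff; repeat split; lia.
Qed.

(* Of the nine lower bounds in k0min only a + b + l, 2p - l and a + p can be maximal;
   together with k0max = a + b + p - l they rearrange into M(p, l). *)
Lemma fusionN_param : fusionN k (a, b) (b, a) (p - 2 * l, p + l) = Z.max 0 (Mfun k a b p l).
Proof.
  rewrite fusionN_eq_max0.
  - unfold k0max. rewrite k0min_param, Aw_param, Bw_param. unfold Mfun. lia.
  - rewrite A3_param. apply Z_mod_mult.
  - rewrite B3_param. apply Z_mod_mult.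
  - rewrite k0min_param. lia.
Qed.

End Param.

Lemma Rset_swap x y : Rset k (a, b) (b, a) (x, y) <-> Rset k (a, b) (b, a) (y, x).
Proof. unfold Rset, inP; cbn [fst snd]. rewrite fusionN_swap. lia. Qed.

Lemma fusionN_support_shape nu :
  fusionN k (a, b) (b, a) nu <> 0 -> exists p l, nu = (p - 2 * l, p + l).
Proof.
  destruct nu as [x y]. intros Hnz.
  pose proof (fusionN_integral _ _ _ _ Hnz) as Hmod.
  unfold A3 in Hmod; cbn [fst snd] in Hmod.
  assert (y - x = 3 * ((y - x) / 3)) by (Z.div_mod_to_equations; lia).
  exists (y - (y - x) / 3), ((y - x) / 3). f_equal; lia.
Qed.

Lemma Rset_param p l : 0 <= l ->
  Rset k (a, b) (b, a) (p - 2 * l, p + l) <-> 0 <= p - 2 * l /\ 1 <= Mfun k a b p l.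
Proof.
  intros l_ge0. unfold Rset, inP; cbn [fst snd]. rewrite fusionN_param by exact l_ge0.
  unfold Mfun. lia.
Qed.

Lemma Rset_iff nu : Rset k (a, b) (b, a) nu <->
  exists p l, 0 <= l /\ (nu = (p - 2 * l, p + l) \/ nu = (p + l, p - 2 * l)) /\
              0 <= p - 2 * l /\ 1 <= Mfun k a b p l.
Proof.
  split.
  - intros HR. destruct (fusionN_support_shape nu (proj2 HR)) as (p & l & ->).
    destruct (Z_le_gt_dec 0 l) as [l_ge0 | l_lt0].
    + exists p, l. rewrite <- Rset_param by exact l_ge0. auto.
    + (* for l < 0 the weight is (p' + l', p' - 2l') with p' = p - l and l' = -l > 0 *)
      exists (p - l), (- l).
      replace (p - 2 * l, p + l) with (p - l + - l, p - l - 2 * - l) in HR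
        by (f_equal; ring).
      apply Rset_swap, Rset_param in HR; [| lia].
      split; [lia |]. split; [right; f_equal; ring | exact HR].
  - intros (p & l & l_ge0 & Hnu & Hreg). rewrite <- Rset_param in Hreg by exact l_ge0.
    destruct Hnu as [-> | ->]; [exact Hreg | now apply Rset_swap].
Qed.

Hypothesis a_plus_b_le_k : a + b <= k.

Lemma pair_regions_iff p l :
  T1par k a b p l \/ T2par k a b p l \/ T3par k a b p l <->
  1 <= l /\ 0 <= p - 2 * l /\ 1 <= Mfun k a b p l.
Proof.
  unfold T1par, T2par, T3par, Mfun.
  rewrite !le_div_iff_mul_le by lia.
  split.
  - lia.
  - intros Hreg.
    destruct (Z_le_gt_dec l (p - a - 1)); [left; lia |].
    destruct (Z_le_gt_dec l (p - b)); [right; left; lia | right; right; lia].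
Qed.

Lemma diag_regions_iff p :
  T4par k a b p \/ T5par k a b p <-> 0 <= p /\ 1 <= Mfun k a b p 0.
Proof.
  unfold T4par, T5par, Mfun.
  rewrite le_div_iff_mul_le by lia.
  split.
  - lia.
  - intros Hreg. destruct (Z_le_gt_dec p a); [left | right]; lia.
Qed.

Lemma Tset_union_iff nu :
  Tset k a b 1 nu \/ Tset k a b 2 nu \/ Tset k a b 3 nu \/
  Tset k a b 4 nu \/ Tset k a b 5 nu <->
  exists p l, 0 <= l /\ (nu = (p - 2 * l, p + l) \/ nu = (p + l, p - 2 * l)) /\
              0 <= p - 2 * l /\ 1 <= Mfun k a b p l.
Proof.
  cbn [Tset]. unfold pairset, diagset. split.
  - intros [(p & l & HT & Hnu) | [(p & l & HT & Hnu) | [(p & l & HT & Hnu) | HD]]].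
    1-3: assert (Hreg : 1 <= l /\ 0 <= p - 2 * l /\ 1 <= Mfun k a b p l)
           by (apply pair_regions_iff; tauto);
         exists p, l; repeat split; tauto || lia.
    assert (HD' : exists p, (T4par k a b p \/ T5par k a b p) /\ nu = (p, p))
      by (destruct HD as [(p & ? & ?) | (p & ? & ?)]; eauto).
    destruct HD' as (p & Hreg & ->). apply diag_regions_iff in Hreg.
    exists p, 0. repeat split; [lia | left; f_equal; ring | lia | tauto].
  - intros (p & l & l_ge0 & Hnu & Hreg).
    destruct (Z.eq_dec l 0) as [-> | l_ne0].
    + assert (Hnu' : nu = (p, p)) by (destruct Hnu as [-> | ->]; f_equal; ring).
      assert (HD : T4par k a b p \/ T5par k a b p) by (apply diag_regions_iff; lia).
      destruct HD; [do 3 right; left | do 4 right]; exists p; auto.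
    + assert (HP : T1par k a b p l \/ T2par k a b p l \/ T3par k a b p l)
        by (apply pair_regions_iff; lia).
      destruct HP as [HP | [HP | HP]];
        [left | right; left | right; right; left]; exists p, l; auto.
Qed.

Lemma T1par_T2par_disjoint p l : T1par k a b p l -> ~ T2par k a b p l.
Proof. unfold T1par, T2par. lia. Qed.

Lemma T1par_T3par_disjoint p l : T1par k a b p l -> ~ T3par k a b p l.
Proof. unfold T1par, T3par. lia. Qed.

Lemma T2par_T3par_disjoint p l : T2par k a b p l -> ~ T3par k a b p l.
Proof. unfold T2par, T3par. lia. Qed.

Lemma T4par_T5par_disjoint p : T4par k a b p -> ~ T5par k a b p.
Proof. unfold T4par, T5par. lia. Qed.

Lemma Tset_disjoint_lt i j nu : (1 <= i)%nat -> (i < j <= 5)%nat ->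
  ~ (Tset k a b i nu /\ Tset k a b j nu).
Proof.
  intros Hi Hj [Ti Tj].
  assert (T1_pos : forall p l, T1par k a b p l -> 1 <= l) by (unfold T1par; lia).
  assert (T2_pos : forall p l, T2par k a b p l -> 1 <= l) by (unfold T2par; lia).
  assert (T3_pos : forall p l, T3par k a b p l -> 1 <= l) by (unfold T3par; lia).
  destruct i as [|[|[|[|[|i]]]]], j as [|[|[|[|[|[|j]]]]]]; try lia; cbn [Tset] in Ti, Tj.
  - destruct (pairset_inter _ _ nu T1_pos T2_pos Ti Tj) as (p & l & H1 & H2).
    exact (T1par_T2par_disjoint p l H1 H2).
  - destruct (pairset_inter _ _ nu T1_pos T3_pos Ti Tj) as (p & l & H1 & H3).
    exact (T1par_T3par_disjoint p l H1 H3).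
  - exact (pairset_diagset_disjoint _ _ nu T1_pos Ti Tj).
  - exact (pairset_diagset_disjoint _ _ nu T1_pos Ti Tj).
  - destruct (pairset_inter _ _ nu T2_pos T3_pos Ti Tj) as (p & l & H2 & H3).
    exact (T2par_T3par_disjoint p l H2 H3).
  - exact (pairset_diagset_disjoint _ _ nu T2_pos Ti Tj).
  - exact (pairset_diagset_disjoint _ _ nu T2_pos Ti Tj).
  - exact (pairset_diagset_disjoint _ _ nu T3_pos Ti Tj).
  - exact (pairset_diagset_disjoint _ _ nu T3_pos Ti Tj).
  - destruct (diagset_inter _ _ nu Ti Tj) as (p & H4 & H5).
    exact (T4par_T5par_disjoint p H4 H5).
Qed.

End FusionOfDualPair.

Theorem mainTheorem4 (k a b : Z) :
  1 <= k -> 0 <= b -> b <= a -> a + b <= k ->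
  (forall nu : weight,
     Rset k (a, b) (b, a) nu <->
     (Tset k a b 1 nu \/ Tset k a b 2 nu \/ Tset k a b 3 nu \/
      Tset k a b 4 nu \/ Tset k a b 5 nu)) /\
  (forall (i j : nat) (nu : weight),
     (1 <= i <= 5)%nat -> (1 <= j <= 5)%nat -> i <> j ->
     ~ (Tset k a b i nu /\ Tset k a b j nu)) /\
  (forall p l : Z,
     T1par k a b p l \/ T2par k a b p l \/ T3par k a b p l ->
     fusionN k (a, b) (b, a) (p - 2 * l, p + l) = Mfun k a b p l /\
     fusionN k (a, b) (b, a) (p + l, p - 2 * l) = Mfun k a b p l) /\
  (forall p : Z,
     T4par k a b p \/ T5par k a b p ->
     fusionN k (a, b) (b, a) (p, p) = Mfun k a b p 0).
Proof.
  intros _ b_ge0 b_le_a a_plus_b_le_k.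
  split; [| split; [| split]].
  - intros nu. rewrite Rset_iff, Tset_union_iff by assumption. reflexivity.
  - intros i j nu Hi Hj Hij.
    destruct (Nat.lt_total i j) as [Hlt | [Heq | Hgt]]; [| contradiction |].
    + apply Tset_disjoint_lt; lia.
    + rewrite and_comm. apply Tset_disjoint_lt; lia.
  - intros p l Hreg.
    apply pair_regions_iff in Hreg as (l_pos & _ & M_pos); [| assumption ..].
    rewrite (fusionN_swap _ _ _ (p + l)), fusionN_param by lia. lia.
  - intros p Hreg.
    apply diag_regions_iff in Hreg as (_ & M_pos); [| assumption ..].
    replace (p, p) with (p - 2 * 0, p + 0) by (f_equal; ring).
    rewrite fusionN_param by lia. lia.
Qed.
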